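(* Let $M,N\in\mathbb{S}^{q+r}$. If there exist scalars $\alpha\in\mathbb{R}$ and $\beta>0$ such that $M-\alpha N\ge\begin{bmatrix}\beta I_q&0\\0&0\end{bmatrix}$ ( * ), then $\mathcal{Z}_r^0(N)\subseteq\mathcal{Z}_r^+(M)$. Moreover, if $N\in\boldsymbol{\Pi}_{q,r}$, $N\mid N_{22}=0$ and $M_{22}\le 0$, then $\mathcal{Z}_r^0(N)\subseteq\mathcal{Z}_r^+(M)$ if and only if there exist $\alpha\ge 0$ and $\beta>0$ such that ( * ) holds.
   Context: $\mathbb{S}^k$ denotes the real symmetric $k\times k$ matrices; for symmetric matrices, $A\ge 0$ ($A>0$) means positive semidefinite (definite), $A\le B$ means $B-A\ge0$. $A^\dagger$ is the Moore–Penrose pseudo-inverse. Any $\Pi\in\mathbb{S}^{q+r}$ (in particular $M,N$) is partitioned as $\Pi=\begin{bmatrix}\Pi_{11}&\Pi_{12}\\ \Pi_{21}&\Pi_{22}\end{bmatrix}$ with $\Pi_{11}\in\mathbb{S}^q$, $\Pi_{22}\in\mathbb{S}^r$. The generalized Schur complement is $\Pi\mid\Pi_{22}:=\Pi_{11}-\Pi_{12}\Pi_{22}^\dagger\Pi_{21}$. The set $\boldsymbol{\Pi}_{q,r}$ consists of all $\Pi\in\mathbb{S}^{q+r}$ with $\Pi_{22}\le 0$, $\Pi\mid\Pi_{22}\ge 0$ and $\ker\Pi_{22}\subseteq\ker\Pi_{12}$. Define $\mathcal{Z}_r^+(\Pi)=\{Z\in\mathbb{R}^{r\times q}:\begin{bmatrix}I_q\\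 Z\end{bmatrix}^\top\Pi\begin{bmatrix}I_q\\ Z\end{bmatrix}> 0\}$ and $\mathcal{Z}_r^0(\Pi)$ the same with $=0$. *)

From HB Require Import structures.
From mathcomp Require Import all_boot all_order all_algebra.
From mathcomp Require Import reals.
From Stdlib Require Import ClassicalEpsilon.
Set Implicit Arguments. Unset Strict Implicit. Unset Printing Implicit Defensive.
Import Order.TTheory GRing.Theory Num.Theory.
Local Open Scope ring_scope.

Section Defs.
Variable R : realType.

Definition symmx n (A : 'M[R]_n) : Prop := A^T = A.

Definition qform n (A : 'M[R]_n) (x : 'cV[R]_n) : R := (x^T *m A *m x) 0 0.

Definition psdmx n (A : 'M[R]_n) : Prop := forall x, 0 <= qform A x.
Definition pdmx n (A : 'M[R]_n) : Prop := forall x, x != 0 -> 0 < qform A x.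

Definition lemx n (A B : 'M[R]_n) : Prop := psdmx (B - A).

(* Moore--Penrose pseudo-inverse: the (unique, existing) matrix satisfying
   the four Penrose equations; chosen by classical choice. *)
Definition is_pinv m n (A : 'M[R]_(m, n)) (X : 'M[R]_(n, m)) : Prop :=
  [/\ A *m X *m A = A, X *m A *m X = X,
      (A *m X)^T = A *m X & (X *m A)^T = X *m A].

Definition pinvmx m n (A : 'M[R]_(m, n)) : 'M[R]_(n, m) :=
  epsilon (inhabits 0) (is_pinv A).

(* Partition of Pi in S^(q+r):  Pi11 = ulsubmx, Pi12 = ursubmx,
   Pi21 = dlsubmx, Pi22 = drsubmx.  Generalized Schur complement Pi | Pi22. *)
Definition schurmx q r (P : 'M[R]_(q + r)) : 'M[R]_q :=
  ulsubmx P - ursubmx P *m pinvmx (drsubmx P) *m dlsubmx P.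

Definition PiSet q r (P : 'M[R]_(q + r)) : Prop :=
  [/\ symmx P,
      lemx (drsubmx P) 0,
      psdmx (schurmx P)
    & forall x : 'cV[R]_r, drsubmx P *m x = 0 -> ursubmx P *m x = 0].

Definition IZ q r (Z : 'M[R]_(r, q)) : 'M[R]_(q + r, q) := col_mx 1%:M Z.

Definition Zplus q r (P : 'M[R]_(q + r)) : 'M[R]_(r, q) -> Prop :=
  fun Z => pdmx ((IZ Z)^T *m P *m IZ Z).
Definition Zzero q r (P : 'M[R]_(q + r)) : 'M[R]_(r, q) -> Prop :=
  fun Z => (IZ Z)^T *m P *m IZ Z = 0.

Definition starcond q r (M N : 'M[R]_(q + r)) (alpha beta : R) : Prop :=
  lemx (block_mx (beta%:M : 'M[R]_q) 0 0 (0 : 'M[R]_r)) (M - alpha *: N).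

End Defs.

From Pilot Require Import Defs.
From HB Require Import structures.
From mathcomp Require Import all_boot all_order all_algebra.
From mathcomp Require Import reals.
From mathcomp Require Import ring lra.
From Stdlib Require Import ClassicalEpsilon.
Set Implicit Arguments.
Unset Strict Implicit.
Unset Printing Implicit Defensive.
Import Order.TTheory GRing.Theory Num.Theory.
Local Open Scope ring_scope.

(* Sufficiency: for Z in Z^0(N), the star condition evaluated at [I; Z] x gives
   x^T [I; Z]^T M [I; Z] x >= beta |x|^2.
   Necessity: when N | N22 = 0 and ker N22 is contained in ker N12, N factors as
   [K I]^T N22 [K I] with K = N22^+ N21, so Z lies in Z^0(N) as soon as
   N22 (K + Z) = 0.  This holds for Z0 = -K and for all rank-one perturbations
   Z0 + w y^T with w in ker N22; positivity of the form of M along these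
   perturbations forces M22 and the cross block [I; Z0]^T M E to vanish on
   ker N22.  Hence, writing v = [I; Z0] x + E w, the form of M at v depends
   only on x and on u = N22 [K I] v, where x^T [I; Z0]^T M [I; Z0] x >=
   lambda |x|^2 and |u|^2 <= tr(-N22) (-v^T N v).  Absorbing the cross term by
   AM-GM gives the star condition with beta = lambda / 2. *)

Section PseudoInverse.
Variable R : realType.

Lemma mulmx_tr_eq0 m n (B : 'M[R]_(m, n)) : B *m B^T = 0 -> B = 0.
Proof.
move=> BBt0; apply/matrixP => i j; rewrite mxE.
have /matrixP /(_ i i) := BBt0; rewrite !mxE => sum0.
have sqsum0 : \sum_(k < n) B i k ^+ 2 = 0.
  by rewrite -[RHS]sum0; apply: eq_bigr => k _; rewrite mxE expr2.
have /eqP : B i j ^+ 2 = 0 by apply: (psumr_eq0P _ sqsum0) => // k _; apply: sqr_ge0.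
by rewrite sqrf_eq0 => /eqP.
Qed.

Lemma row_free_gram_unit m n (F : 'M[R]_(m, n)) : row_free F -> F *m F^T \in unitmx.
Proof.
move=> freeF; rewrite -row_free_unit -kermx_eq0; apply/eqP.
set V := kermx _.
have : (V *m F) *m (V *m F)^T = 0.
  by rewrite trmx_mul !mulmxA -(mulmxA V) mulmx_ker mul0mx.
by move/mulmx_tr_eq0/eqP; rewrite mulmx_free_eq0 // => /eqP.
Qed.

Lemma is_pinv_mulmx m n k (F : 'M[R]_(m, k)) (G : 'M[R]_(k, n)) :
  row_free F^T -> row_free G ->
  is_pinv (F *m G) (G^T *m invmx (G *m G^T) *m invmx (F^T *m F) *m F^T).
Proof.
move=> freeFt freeG.
have uG := row_free_gram_unit freeG.
have uF : F^T *m F \in unitmx by have := row_free_gram_unit freeFt; rewrite trmxK.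
set iG := invmx (G *m G^T); set iF := invmx (F^T *m F).
have iGT : iG^T = iG by rewrite /iG trmx_inv trmx_mul trmxK.
have iFT : iF^T = iF by rewrite /iF trmx_inv trmx_mul trmxK.
have AX : (F *m G) *m (G^T *m iG *m iF *m F^T) = F *m iF *m F^T.
  by rewrite !mulmxA -(mulmxA F G) -(mulmxA F) mulmxV // mulmx1.
have XA : (G^T *m iG *m iF *m F^T) *m (F *m G) = G^T *m iG *m G.
  by rewrite !mulmxA -(mulmxA _ F^T F) -(mulmxA _ iF) mulVmx // mulmx1.
split.
- by rewrite AX !mulmxA -(mulmxA _ F^T F) -(mulmxA F iF) mulVmx // mulmx1.
- rewrite XA !mulmxA -[G^T *m iG *m G *m G^T]mulmxA.
  by rewrite -[G^T *m iG *m (G *m G^T) *m iG]mulmxA mulmxV // mulmx1.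
- by rewrite AX !trmx_mul trmxK iFT mulmxA.
- by rewrite XA !trmx_mul trmxK iGT mulmxA.
Qed.

Lemma pinvmxP m n (A : 'M[R]_(m, n)) : is_pinv A (Defs.pinvmx A).
Proof.
apply: epsilon_spec.
have freeCt : row_free (col_base A)^T.
  by rewrite /row_free mxrank_tr; apply: col_base_full.
move: (is_pinv_mulmx freeCt (row_base_free A)); rewrite mulmx_base => h.
exact: ex_intro h.
Qed.

End PseudoInverse.

Section BilinearForms.
Variable R : realType.

Definition bform m n (E : 'M[R]_(m, n)) (x : 'cV[R]_m) (u : 'cV[R]_n) : R :=
  (x^T *m E *m u) 0 0.
Definition sqnorm m (x : 'cV[R]_m) : R := (x^T *m x) 0 0.
Definition l1mx m n (E : 'M[R]_(m, n)) : R := \sum_j \sum_i `|E i j|.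

Lemma qformE n (S : 'M[R]_n) x : qform S x = bform S x x.
Proof. by []. Qed.

Lemma bform_sum m n (E : 'M[R]_(m, n)) x u :
  bform E x u = \sum_j \sum_i x i 0 * E i j * u j 0.
Proof.
rewrite /bform mxE; apply: eq_bigr => j _; rewrite mxE mulr_suml.
by apply: eq_bigr => i _; rewrite mxE.
Qed.

Lemma sqnorm_sum m (x : 'cV[R]_m) : sqnorm x = \sum_i x i 0 ^+ 2.
Proof. by rewrite /sqnorm mxE; apply: eq_bigr => i _; rewrite mxE expr2. Qed.

Lemma sqnorm_ge0 m (x : 'cV[R]_m) : 0 <= sqnorm x.
Proof. by rewrite sqnorm_sum; apply: sumr_ge0 => i _; apply: sqr_ge0. Qed.

Lemma sqr_coord_le_sqnorm m (x : 'cV[R]_m) i : x i 0 ^+ 2 <= sqnorm x.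
Proof.
by rewrite sqnorm_sum (bigD1 i) //= lerDl; apply: sumr_ge0 => k _; apply: sqr_ge0.
Qed.

Lemma sqnorm_gt0 m (x : 'cV[R]_m) : x != 0 -> 0 < sqnorm x.
Proof.
move=> x_neq0; rewrite lt_neqAle sqnorm_ge0 andbT; apply: contra x_neq0.
rewrite eq_sym sqnorm_sum => /eqP sum0; apply/eqP/matrixP => i j.
have /eqP : x i 0 ^+ 2 = 0 by apply: (psumr_eq0P _ sum0) => // k _; apply: sqr_ge0.
by rewrite (ord1 j) sqrf_eq0 mxE => /eqP.
Qed.

Lemma sqnormN m (x : 'cV[R]_m) : sqnorm (- x) = sqnorm x.
Proof. by rewrite /sqnorm (raddfN (@trmx R m 1)) mulNmx mulmxN opprK. Qed.

Lemma l1mx_ge0 m n (E : 'M[R]_(m, n)) : 0 <= l1mx E.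
Proof. by apply: sumr_ge0 => j _; apply: sumr_ge0 => i _. Qed.

Lemma amgm2 (t a b : R) : 0 < t -> 2 * (`|a| * `|b|) <= t * a ^+ 2 + b ^+ 2 / t.
Proof.
move=> t_gt0; rewrite -[a ^+ 2]real_normK ?num_real // -[b ^+ 2]real_normK ?num_real //.
have : 0 <= (t * `|a| - `|b|) ^+ 2 / t by rewrite divr_ge0 ?sqr_ge0 ?ltW.
suff -> : (t * `|a| - `|b|) ^+ 2 / t = t * `|a| ^+ 2 + `|b| ^+ 2 / t - 2 * (`|a| * `|b|).
  by rewrite subr_ge0.
by field; rewrite gt_eqF.
Qed.

Lemma bform_norm_le m n (E : 'M[R]_(m, n)) x u t : 0 < t ->
  2 * `|bform E x u| <= l1mx E * (t * sqnorm x + sqnorm u / t).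
Proof.
move=> t_gt0; rewrite bform_sum /l1mx mulr_suml.
apply: (@le_trans _ _ (2 * \sum_j \sum_i `|x i 0 * E i j * u j 0|)).
  rewrite ler_pM2l //; apply: le_trans (ler_norm_sum _ _ _) _.
  by apply: ler_sum => j _; apply: ler_norm_sum.
rewrite mulr_sumr; apply: ler_sum => j _; rewrite mulr_sumr mulr_suml.
apply: ler_sum => i _; rewrite !normrM.
have -> : 2 * (`|x i 0| * `|E i j| * `|u j 0|) = `|E i j| * (2 * (`|x i 0| * `|u j 0|)).
  by ring.
rewrite ler_wpM2l //; apply: le_trans (amgm2 _ _ t_gt0) _; apply: lerD.
  by rewrite ler_pM2l // sqr_coord_le_sqnorm.
by rewrite ler_pM2r ?invr_gt0 // sqr_coord_le_sqnorm.
Qed.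

Lemma bform_le_l1mx n (E : 'M[R]_n) x : bform E x x <= l1mx E * sqnorm x.
Proof.
have := bform_norm_le E x x ltr01; rewrite mul1r divr1 => le2.
rewrite -(ler_pM2l (ltr0n _ 2)).
apply: le_trans (ler_wpM2l _ (ler_norm _)) _ => //.
apply: le_trans le2 _.
by rewrite -mulr2n mulrnAr mulr_natl.
Qed.

Lemma bform_tr m n (E : 'M[R]_(m, n)) x u : bform E x u = bform E^T u x.
Proof.
rewrite /bform; transitivity ((x^T *m E *m u)^T 0 0); first by rewrite [RHS]mxE.
by rewrite !trmx_mul trmxK mulmxA.
Qed.

Lemma bformC n (S : 'M[R]_n) x u : symmx S -> bform S x u = bform S u x.
Proof. by move=> symS; rewrite bform_tr symS. Qed.

Lemma bformDl m n (E : 'M[R]_(m, n)) x y u :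
  bform E (x + y) u = bform E x u + bform E y u.
Proof. by rewrite /bform linearD /= !mulmxDl mxE. Qed.

Lemma bformDr m n (E : 'M[R]_(m, n)) x u v :
  bform E x (u + v) = bform E x u + bform E x v.
Proof. by rewrite /bform !mulmxDr mxE. Qed.

Lemma bformZl m n (E : 'M[R]_(m, n)) c x u : bform E (c *: x) u = c * bform E x u.
Proof. by rewrite /bform linearZ /= -!scalemxAl mxE. Qed.

Lemma bformZr m n (E : 'M[R]_(m, n)) c x u : bform E x (c *: u) = c * bform E x u.
Proof. by rewrite /bform -!scalemxAr mxE. Qed.

Lemma bform0l m n (E : 'M[R]_(m, n)) u : bform E 0 u = 0.
Proof. by rewrite -(scale0r (0 : 'cV_m)) bformZl mul0r. Qed.

Lemma bform0 m n (x : 'cV[R]_m) (u : 'cV[R]_n) : bform 0 x u = 0.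
Proof. by rewrite /bform mulmx0 mul0mx mxE. Qed.

Lemma bformD m n (E F : 'M[R]_(m, n)) x u :
  bform (E + F) x u = bform E x u + bform F x u.
Proof. by rewrite /bform mulmxDr mulmxDl mxE. Qed.

Lemma bformZ m n (E : 'M[R]_(m, n)) c x u : bform (c *: E) x u = c * bform E x u.
Proof. by rewrite /bform -scalemxAr -scalemxAl mxE. Qed.

Lemma bformN m n (E : 'M[R]_(m, n)) x u : bform (- E) x u = - bform E x u.
Proof. by rewrite -scaleN1r bformZ mulN1r. Qed.

Lemma bformB m n (E F : 'M[R]_(m, n)) x u :
  bform (E - F) x u = bform E x u - bform F x u.
Proof. by rewrite bformD bformN. Qed.

Lemma bform_mulmx m n k l (C : 'M[R]_(m, k)) (E : 'M[R]_(m, n)) (D : 'M[R]_(n, l)) x u :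
  bform (C^T *m E *m D) x u = bform E (C *m x) (D *m u).
Proof. by rewrite /bform trmx_mul !mulmxA. Qed.

Lemma bform_delta m n (E : 'M[R]_(m, n)) i u : bform E (delta_mx i 0) u = (E *m u) i 0.
Proof. by rewrite /bform trmx_delta -mulmxA -rowE mxE. Qed.

Lemma bform_ker m n (E : 'M[R]_(m, n)) x u : E *m u = 0 -> bform E x u = 0.
Proof. by move=> Eu0; rewrite /bform -mulmxA Eu0 mulmx0 mxE. Qed.

Lemma bform_comb n (S : 'M[R]_n) a b c d : symmx S ->
  bform S (c *: a + d *: b) (c *: a + d *: b) =
  c ^+ 2 * bform S a a + 2 * c * d * bform S a b + d ^+ 2 * bform S b b.
Proof. by move=> symS; rewrite !bformDl !bformDr !bformZl !bformZr (bformC b a symS); ring. Qed.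

End BilinearForms.

Section Definite.
Variable R : realType.

Lemma psd_bform_CauchySchwarz n (S : 'M[R]_n) a b : symmx S -> psdmx S ->
  bform S a b ^+ 2 <= bform S a a * bform S b b.
Proof.
move=> symS psdS.
have comb_ge0 c d : 0 <= c ^+ 2 * bform S a a + 2 * c * d * bform S a b + d ^+ 2 * bform S b b.
  by rewrite -bform_comb //; apply: psdS.
have qa_ge0 : 0 <= bform S a a by apply: psdS.
have qb_ge0 : 0 <= bform S b b by apply: psdS.
move: comb_ge0 qa_ge0 qb_ge0; set qa := bform S a a; set qb := bform S b b; set k := bform S a b.
move=> comb_ge0 qa_ge0 qb_ge0.
have [qb_gt0|] := ltP 0 qb; first by have := comb_ge0 qb (- k); nra.
rewrite le_eqVlt ltNge qb_ge0 orbF => /eqP qb0; rewrite qb0 in comb_ge0 *.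
have [->|k_neq0] := eqVneq k 0; first by rewrite expr0n mulr0.
(* with qb = 0 the form is affine in d, so it cannot stay nonnegative unless k = 0 *)
have := comb_ge0 1 (- (qa + 1) / (2 * k)).
have -> : 2 * 1 * (- (qa + 1) / (2 * k)) * k = - (qa + 1) by field.
lra.
Qed.

Lemma psd_qform_eq0 n (S : 'M[R]_n) w : symmx S -> psdmx S -> qform S w = 0 -> S *m w = 0.
Proof.
move=> symS psdS qw0; apply/matrixP => i j; rewrite (ord1 j) [RHS]mxE -bform_delta.
have := psd_bform_CauchySchwarz (delta_mx i 0) w symS psdS.
rewrite -[bform S w w]qformE qw0 mulr0 => le0.
by apply/eqP; rewrite -sqrf_eq0 eq_le le0 sqr_ge0.
Qed.

Lemma bform_delta_diag n (S : 'M[R]_n) i : bform S (delta_mx i 0) (delta_mx i 0) = S i i.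
Proof. by rewrite bform_delta -colE mxE. Qed.

Lemma mxtrace_psd_ge0 n (S : 'M[R]_n) : psdmx S -> 0 <= \tr S.
Proof. by move=> psdS; apply: sumr_ge0 => i _; rewrite -bform_delta_diag; apply: psdS. Qed.

Lemma sqnorm_psd_mul_le n (S : 'M[R]_n) w : symmx S -> psdmx S ->
  sqnorm (S *m w) <= \tr S * qform S w.
Proof.
move=> symS psdS; rewrite sqnorm_sum /mxtrace mulr_suml; apply: ler_sum => i _.
by rewrite -bform_delta -bform_delta_diag; apply: psd_bform_CauchySchwarz.
Qed.

Lemma pd_psd n (A : 'M[R]_n) : pdmx A -> psdmx A.
Proof.
move=> pdA x; have [->|x_neq0] := eqVneq x 0; first by rewrite qformE bform0l.
exact/ltW/pdA.
Qed.

Lemma pd_unitmx n (A : 'M[R]_n) : pdmx A -> A \in unitmx.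
Proof.
move=> pdA; rewrite unitmxE unitfE; apply/negP => /det0P [v v_neq0 vA0].
have : 0 < qform A v^T by apply: pdA; rewrite trmx_eq0.
by rewrite qformE /bform trmxK vA0 mul0mx mxE ltxx.
Qed.

(* Cauchy--Schwarz for the form of A applied to x and A^-1 x gives
   |x|^4 <= (x^T A x) (x^T A^-T x) <= (x^T A x) |A^-1|_1 |x|^2. *)
Lemma pd_sqnorm_lbound n (A : 'M[R]_n) : symmx A -> pdmx A ->
  exists2 lam, 0 < lam & forall x, lam * sqnorm x <= qform A x.
Proof.
move=> symA pdA; have unitA := pd_unitmx pdA; have psdA := pd_psd pdA.
set Y := invmx A; set c := l1mx Y^T.
have c_ge0 : 0 <= c by apply: l1mx_ge0.
exists (c + 1)^-1; first by rewrite invr_gt0; lra.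
move=> x; rewrite mulrC ler_pdivrMr; last by lra.
have eAY : bform A x (Y *m x) = sqnorm x.
  by rewrite /bform /sqnorm mulmxA -(mulmxA _ A) mulmxV // mulmx1.
have eYAY : bform A (Y *m x) (Y *m x) = bform Y^T x x.
  by rewrite -bform_mulmx -mulmxA mulmxV // mulmx1.
have CS := psd_bform_CauchySchwarz x (Y *m x) symA psdA; rewrite eAY eYAY in CS.
have b_le : bform Y^T x x <= c * sqnorm x by apply: bform_le_l1mx.
have b_ge0 : 0 <= bform Y^T x x by rewrite -eYAY; apply: psdA.
have a_ge0 : 0 <= qform A x by apply: psdA.
have s_ge0 := sqnorm_ge0 x.
rewrite qformE in a_ge0 *.
move: CS b_le b_ge0 a_ge0 s_ge0.
set a := bform A x x; set s := sqnorm x; set b := bform Y^T x x.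
move=> CS b_le b_ge0 a_ge0 s_ge0.
have [->|s_neq0] := eqVneq s 0; first by nra.
have s_gt0 : 0 < s by rewrite lt_neqAle eq_sym s_neq0.
have : s * s <= s * (a * c) by nra.
by rewrite ler_pM2l // => ?; nra.
Qed.

End Definite.

Lemma quadratic_pos_degenerate (R : realType) (a b c : R) : 0 < a -> c <= 0 ->
  (forall t, 0 < a + 2 * t * b + t ^+ 2 * c) -> c = 0 /\ b = 0.
Proof.
move=> a_gt0 c_le0 pos.
have c0 : c = 0.
  apply/eqP; rewrite eq_le c_le0 leNgt; apply/negP => c_lt0.
  have t_ge1 : 1 <= a / - c + 1 by rewrite lerDr divr_ge0 ?oppr_ge0 ?ltW.
  have tc : (a / - c + 1) * c = - a + c by field; rewrite lt_eqF.
  have := pos (a / - c + 1); have := pos (- (a / - c + 1)); nra.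
split => //; apply/eqP/negPn/negP => b_neq0.
have := pos (- a / (2 * b)); rewrite c0 mulr0 addr0.
have -> : 2 * (- a / (2 * b)) * b = - a by field.
lra.
Qed.

Section Blocks.
Variables (R : realType) (q r : nat).

Definition Emx : 'M[R]_(q + r, r) := col_mx 0 1%:M.

Lemma Emx_mulmx (w : 'cV[R]_r) : Emx *m w = col_mx 0 w.
Proof. by rewrite /Emx mul_col_mx mul0mx mul1mx. Qed.

Lemma IZ_mulmx (Z : 'M[R]_(r, q)) (x : 'cV[R]_q) : IZ Z *m x = col_mx x (Z *m x).
Proof. by rewrite /IZ mul_col_mx mul1mx. Qed.

Lemma Emx_drsubmx (M : 'M[R]_(q + r)) : Emx^T *m M *m Emx = drsubmx M.
Proof.
rewrite /Emx tr_col_mx trmx0 trmx1 -{1}[M]submxK mul_row_block.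
by rewrite !mul0mx !mul1mx !add0r mul_row_col mulmx0 add0r mulmx1.
Qed.

Lemma bform_block_scalar (be : R) (v : 'cV[R]_(q + r)) :
  bform (block_mx (be%:M : 'M_q) 0 0 (0 : 'M_r)) v v = be * sqnorm (usubmx v).
Proof.
set U : 'M[R]_(q, q + r) := row_mx 1%:M 0.
have -> : block_mx (be%:M : 'M_q) 0 0 (0 : 'M_r) = U^T *m be%:M *m U.
  rewrite /U tr_row_mx trmx1 trmx0 mul_col_mx mul0mx mul_col_row.
  by rewrite mul1mx !mulmx0 mul0mx mulmx1.
have Uv : U *m v = usubmx v.
  by rewrite -{1}[v]vsubmxK /U mul_row_col mul1mx mul0mx addr0.
by rewrite bform_mulmx Uv /bform mul_mx_scalar -scalemxAl mxE.
Qed.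

Lemma starcond_bform (M N : 'M[R]_(q + r)) alpha beta v : starcond M N alpha beta ->
  beta * sqnorm (usubmx v) <= bform M v v - alpha * bform N v v.
Proof.
move=> star; have := star v.
by rewrite qformE !bformB bformZ bform_block_scalar subr_ge0.
Qed.

Lemma starcond_sufficient (M N : 'M[R]_(q + r)) alpha beta Z : 0 < beta ->
  starcond M N alpha beta -> Zzero N Z -> Zplus M Z.
Proof.
move=> beta_gt0 star ZN0 x x_neq0; rewrite qformE bform_mulmx.
have := starcond_bform (IZ Z *m x) star.
rewrite -[bform N _ _]bform_mulmx ZN0 bform0 mulr0 subr0 IZ_mulmx col_mxKu.
by apply: lt_le_trans; rewrite mulr_gt0 ?sqnorm_gt0.
Qed.

End Blocks.

Arguments Emx {R}.

Lemma mulmx_ker_sub (R : realType) m n k p (A : 'M[R]_(m, n)) (B : 'M[R]_(k, n))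
    (Y : 'M[R]_(n, p)) :
  (forall x : 'cV[R]_n, A *m x = 0 -> B *m x = 0) -> A *m Y = 0 -> B *m Y = 0.
Proof.
move=> kerAB AY0; apply/matrixP => i j.
have := kerAB (col j Y); rewrite colE mulmxA AY0 mul0mx => /(_ erefl).
by rewrite mulmxA -colE => /matrixP /(_ i 0); rewrite !mxE.
Qed.

Section SchurFactor.
Variables (R : realType) (q r : nat) (N : 'M[R]_(q + r)).
Hypotheses (symN : symmx N) (schurN0 : schurmx N = 0)
  (kerN : forall x : 'cV[R]_r, drsubmx N *m x = 0 -> ursubmx N *m x = 0).

(* K is N22^+ N21 up to transposing the pseudo-inverse (which avoids proving
   that the pseudo-inverse of a symmetric matrix is symmetric). *)
Definition schur_kmx : 'M[R]_(r, q) := (Defs.pinvmx (drsubmx N))^T *m dlsubmx N.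
Definition schur_rowmx : 'M[R]_(r, q + r) := row_mx schur_kmx 1%:M.

Lemma schur0_factor : N = schur_rowmx^T *m drsubmx N *m schur_rowmx.
Proof.
set P := drsubmx N; set X := Defs.pinvmx P.
have [PXP _ _ _] := pinvmxP P.
have PT : P^T = P by rewrite /P trmx_drsub symN.
have N12T : (ursubmx N)^T = dlsubmx N by rewrite trmx_ursub symN.
have N12XP : ursubmx N *m X *m P = ursubmx N.
  apply/eqP; rewrite -subr_eq0 -mulmxA -{2}[ursubmx N]mulmx1 -mulmxBr.
  by apply/eqP/(mulmx_ker_sub kerN); rewrite mulmxBr mulmx1 mulmxA PXP subrr.
have PK : P *m schur_kmx = dlsubmx N.
  by rewrite /schur_kmx -N12T mulmxA -{1}PT -!trmx_mul mulmxA N12XP.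
have KP : schur_kmx^T *m P = ursubmx N by rewrite -{1}PT -trmx_mul PK -N12T trmxK.
have N11 : ulsubmx N = ursubmx N *m schur_kmx.
  move/eqP: schurN0; rewrite /schurmx subr_eq0 => /eqP N11e.
  by rewrite -[LHS]trmxK trmx_ulsub symN N11e !trmx_mul -N12T !trmxK N12T mulmxA.
rewrite /schur_rowmx tr_row_mx trmx1 mul_col_mx mul1mx mul_col_row mulmx1 KP PK -N11.
by rewrite mulmx1 /P submxK.
Qed.

Lemma schur_rowmx_IZ (Z : 'M[R]_(r, q)) : schur_rowmx *m IZ Z = schur_kmx + Z.
Proof. by rewrite /schur_rowmx /IZ mul_row_col mulmx1 mul1mx. Qed.

Lemma Zzero_of_ker (Z : 'M[R]_(r, q)) : drsubmx N *m (schur_kmx + Z) = 0 -> Zzero N Z.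
Proof.
move=> ker0; rewrite /Zzero schur0_factor.
have -> : (IZ Z)^T *m (schur_rowmx^T *m drsubmx N *m schur_rowmx) *m IZ Z =
  (schur_rowmx *m IZ Z)^T *m drsubmx N *m (schur_rowmx *m IZ Z).
  by rewrite trmx_mul !mulmxA.
by rewrite schur_rowmx_IZ -mulmxA ker0 mulmx0.
Qed.

End SchurFactor.

Section Necessity.
Variables (R : realType) (q r : nat) (M N : 'M[R]_(q + r)).
Hypotheses (q_gt0 : (0 < q)%N) (symM : symmx M) (symN : symmx N)
  (schurN0 : schurmx N = 0)
  (kerN : forall x : 'cV[R]_r, drsubmx N *m x = 0 -> ursubmx N *m x = 0)
  (N22_le0 : lemx (drsubmx N) 0) (M22_le0 : lemx (drsubmx M) 0)
  (Zzero_Zplus : forall Z, Zzero N Z -> Zplus M Z).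

Let Z0 : 'M[R]_(r, q) := - schur_kmx N.
Let A := (IZ Z0)^T *m M *m IZ Z0.
Let B := (IZ Z0)^T *m M *m Emx q r.
Let P := drsubmx N.
Let X := Defs.pinvmx P.
Let G := schur_rowmx N.

Lemma Zzero_Z0 : Zzero N Z0.
Proof. by apply: Zzero_of_ker => //; rewrite addrN mulmx0. Qed.

Lemma qform_M_IZ_Emx x w :
  bform M (IZ Z0 *m x + Emx q r *m w) (IZ Z0 *m x + Emx q r *m w) =
  bform A x x + 2 * bform B x w + bform (drsubmx M) w w.
Proof.
have := bform_comb (IZ Z0 *m x) (Emx q r *m w) 1 1 symM.
by rewrite !scale1r => ->; rewrite -!bform_mulmx Emx_drsubmx; ring.
Qed.

Lemma Zplus_along_ker x w t : P *m w = 0 -> x != 0 ->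
  0 < bform A x x + 2 * t * bform B x w + t ^+ 2 * bform (drsubmx M) w w.
Proof.
move=> Pw0 x_neq0; set Z := Z0 + (t / sqnorm x) *: (w *m x^T).
have ZN0 : Zzero N Z.
  apply: Zzero_of_ker => //.
  by rewrite /Z /Z0 addrA subrr add0r -scalemxAr mulmxA Pw0 mul0mx scaler0.
have := Zzero_Zplus ZN0 x_neq0; rewrite qformE bform_mulmx.
have -> : IZ Z *m x = IZ Z0 *m x + Emx q r *m (t *: w).
  rewrite !IZ_mulmx Emx_mulmx add_col_mx addr0 /Z mulmxDl -scalemxAl -mulmxA.
  rewrite [x^T *m x]mx11_scalar mul_mx_scalar scalerA -/(sqnorm x) divfK //.
  by rewrite gt_eqF // sqnorm_gt0.
by rewrite qform_M_IZ_Emx bformZr bformZl bformZr; congr (0 < _); ring.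
Qed.

Lemma ker_N22_annihilates w : P *m w = 0 ->
  drsubmx M *m w = 0 /\ forall x, bform B x w = 0.
Proof.
move=> Pw0.
have A_pd : pdmx A := Zzero_Zplus Zzero_Z0.
have M22w_le0 : bform (drsubmx M) w w <= 0.
  by have := M22_le0 w; rewrite qformE bformB bform0 sub0r oppr_ge0.
have e_neq0 : (delta_mx (Ordinal q_gt0) 0 : 'cV[R]_q) != 0.
  by apply/eqP => /matrixP /(_ (Ordinal q_gt0) 0) /eqP; rewrite !mxE !eqxx oner_eq0.
have [M22w0 _] := quadratic_pos_degenerate (A_pd _ e_neq0) M22w_le0
  (fun t => Zplus_along_ker t Pw0 e_neq0).
split.
  have sym_negM22 : symmx (0 - drsubmx M).
    by rewrite /symmx linearB /= trmx0 trmx_drsub symM.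
  have := psd_qform_eq0 sym_negM22 M22_le0 (w := w).
  rewrite qformE bformB bform0 M22w0 subrr mulmxBl mul0mx sub0r => /(_ erefl) /eqP.
  by rewrite oppr_eq0 => /eqP.
move=> x; have [->|x_neq0] := eqVneq x 0; first exact: bform0l.
by have [_ ->] := quadratic_pos_degenerate (A_pd _ x_neq0) M22w_le0
  (fun t => Zplus_along_ker t Pw0 x_neq0).
Qed.

(* The component of G v in ker N22 is invisible to the form of M, so only
   u = N22 G v and the Z0-coordinate x = v_1 of v matter. *)
Lemma qform_M_decomp v :
  bform M v v = bform A (usubmx v) (usubmx v)
    + 2 * bform (B *m X) (usubmx v) (P *m (G *m v))
    + bform (X^T *m drsubmx M *m X) (P *m (G *m v)) (P *m (G *m v)).
Proof.
set x := usubmx v; set w := G *m v; set u := P *m w.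
have v_dec : v = IZ Z0 *m x + Emx q r *m w.
  have -> : w = schur_kmx N *m x + dsubmx v.
    by rewrite /w /G -{1}[v]vsubmxK /schur_rowmx mul_row_col mul1mx.
  by rewrite IZ_mulmx Emx_mulmx add_col_mx addr0 /Z0 mulNmx addKr /x vsubmxK.
have [PXP _ _ _] := pinvmxP P.
set d := w - X *m u.
have Pd0 : P *m d = 0 by rewrite /d mulmxBr /u !mulmxA PXP subrr.
have [M22d0 Bd0] := ker_N22_annihilates Pd0.
have symM22 : symmx (drsubmx M) by rewrite /symmx trmx_drsub symM.
have w_dec : w = X *m u + d by rewrite /d addrC subrK.
clearbody d.
rewrite {1 2}v_dec qform_M_IZ_Emx w_dec bformDr Bd0 addr0 !bformDl !bformDr.
rewrite (bform_ker _ M22d0) (bform_ker _ M22d0) (bformC _ _ symM22) (bform_ker _ M22d0).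
by rewrite !addr0 bform_mulmx /bform !mulmxA.
Qed.

Lemma sqnorm_ker_le v : sqnorm (P *m (G *m v)) <= \tr (0 - P) * - bform N v v.
Proof.
have symS : symmx (0 - P) by rewrite /symmx linearB /= trmx0 /P trmx_drsub symN.
have := sqnorm_psd_mul_le (G *m v) symS N22_le0.
rewrite mulmxBl mul0mx sub0r sqnormN qformE bformB bform0 sub0r.
by rewrite [in bform N v v](schur0_factor symN schurN0 kerN) bform_mulmx sub0r.
Qed.

Lemma starcond_necessary :
  exists alpha beta, [/\ 0 <= alpha, 0 < beta & starcond M N alpha beta].
Proof.
have symA : symmx A by rewrite /symmx /A !trmx_mul trmxK symM mulmxA.
have [lam lam_gt0 A_lb] := pd_sqnorm_lbound symA (Zzero_Zplus Zzero_Z0).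
set c1 := l1mx (B *m X) + 1; set c2 := l1mx (- (X^T *m drsubmx M *m X)).
set tau := \tr (0 - P); set Kc := 2 * c1 ^+ 2 / lam.
have c1_gt0 : 0 < c1 by rewrite /c1 ltr_pwDr ?l1mx_ge0.
have c2_ge0 : 0 <= c2 by apply: l1mx_ge0.
have tau_ge0 : 0 <= tau by apply: mxtrace_psd_ge0.
have Kc_ge0 : 0 <= Kc by rewrite /Kc divr_ge0 ?mulr_ge0 ?sqr_ge0 ?ltW.
exists ((Kc + c2) * tau), (lam / 2); split; rewrite ?mulr_ge0 ?addr_ge0 ?divr_gt0 //.
move=> v; rewrite qformE !bformB bformZ bform_block_scalar subr_ge0.
set x := usubmx v; set u := P *m (G *m v).
(* t0 = lam / (2 c1) splits the cross term as lam/2 |x|^2 + Kc |u|^2. *)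
set t0 := lam / (2 * c1).
have t0_gt0 : 0 < t0 by rewrite divr_gt0 ?mulr_gt0.
have cross := bform_norm_le (B *m X) x u t0_gt0.
have cross_split : c1 * (t0 * sqnorm x + sqnorm u / t0) = lam / 2 * sqnorm x + Kc * sqnorm u.
  by rewrite /t0 /Kc; field; rewrite !gt_eqF.
have cross_le : l1mx (B *m X) * (t0 * sqnorm x + sqnorm u / t0)
    <= c1 * (t0 * sqnorm x + sqnorm u / t0).
  apply: ler_wpM2r; last by rewrite lerDl.
  by apply: addr_ge0; [apply: mulr_ge0|apply: divr_ge0]; rewrite ?sqnorm_ge0 ?ltW.
have Q_le := bform_le_l1mx (- (X^T *m drsubmx M *m X)) u; rewrite bformN -/c2 in Q_le.
have u_scaled : (Kc + c2) * sqnorm u <= (Kc + c2) * (tau * - bform N v v).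
  by apply: ler_wpM2l; [rewrite addr_ge0|exact: sqnorm_ker_le].
have := A_lb x; have := lerNnormlW (lexx `|bform (B *m X) x u|).
have := sqnorm_ge0 x; have := sqnorm_ge0 u.
rewrite qform_M_decomp qformE -/x -/u; lra.
Qed.

End Necessity.

Theorem mainTheorem12 (R : realType) (q r : nat) (M N : 'M[R]_(q + r)) :
  (0 < q)%N -> symmx M -> symmx N ->
  ((exists alpha beta : R, 0 < beta /\ starcond M N alpha beta) ->
     forall Z, Zzero N Z -> Zplus M Z)
  /\
  (PiSet N -> schurmx N = 0 -> lemx (drsubmx M) 0 ->
     ((forall Z, Zzero N Z -> Zplus M Z) <->
      exists alpha beta : R, [/\ 0 <= alpha, 0 < beta & starcond M N alpha beta])).
Proof.
move=> q_gt0 symM symN; split=> [[alpha [beta [beta_gt0 star]]] Z|].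
  exact: (starcond_sufficient beta_gt0 star).
move=> [_ N22_le0 _ kerN] schurN0 M22_le0.
split=> [Zzero_Zplus|[alpha [beta [_ beta_gt0 star]]] Z].
  exact: starcond_necessary.
exact: (starcond_sufficient beta_gt0 star).
Qed.
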